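(* For every Boolean function $f:\{0,1\}^n\to\{0,1\}$, we have $\deg(f)\le \lambda(f)^2$.
   Context: $\deg(f)$ is the degree of the unique multilinear real polynomial $q\in\mathbb{R}[x_1,\dots,x_n]$ with $q(x)=f(x)$ for all $x\in\{0,1\}^n$. For $f$ with domain $\mathrm{Dom}(f)\subseteq\{0,1\}^n$, the sensitivity graph $G_f$ has vertex set $\mathrm{Dom}(f)$ and an edge between $x$ and $y$ iff $x,y$ differ in exactly one coordinate and $f(x)\ne f(y)$. Let $A_f$ be its adjacency matrix; the spectral sensitivity is $\lambda(f)=\|A_f\|$ (spectral norm). *)

From HB Require Import structures.
From mathcomp Require Import all_boot all_order all_algebra.
From mathcomp Require Import classical_sets reals.
Set Implicit Arguments. Unset Strict Implicit. Unset Printing Implicit Defensive.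
Import Order.TTheory GRing.Theory Num.Theory.
Local Open Scope ring_scope.

Definition cube (n : nat) := {ffun 'I_n -> bool}.

Definition vnorm (R : realType) (m : nat) (v : 'cV[R]_m) : R :=
  Num.sqrt (\sum_(i < m) v i ord0 ^+ 2).

Definition spec_norm (R : realType) (m : nat) (A : 'M[R]_m) : R :=
  sup [set r : R | exists v : 'cV[R]_m, vnorm v = 1 /\ r = vnorm (A *m v)].

Definition sens_edge (n : nat) (f : cube n -> bool) (x y : cube n) : bool :=
  (#|[set i | x i != y i]| == 1)%N && (f x != f y).

Definition sens_adj (R : realType) (n : nat) (f : cube n -> bool)
  : 'M[R]_#|{: cube n}| :=
  \matrix_(i, j) (sens_edge f (enum_val i) (enum_val j))%:R.

Definition spec_sens (R : realType) (n : nat) (f : cube n -> bool) : R :=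
  spec_norm (sens_adj R f).

(* A multilinear real polynomial in x_1..x_n is given by its coefficient
   family c : {set 'I_n} -> R, namely q(x) = \sum_S c S * \prod_(i in S) x_i. *)
Definition ml_eval (R : realType) (n : nat) (c : {set 'I_n} -> R) (x : cube n) : R :=
  \sum_(S : {set 'I_n}) c S * \prod_(i in S) (x i)%:R.

Definition ml_represents (R : realType) (n : nat) (c : {set 'I_n} -> R)
  (f : cube n -> bool) : Prop :=
  forall x : cube n, ml_eval c x = (f x)%:R.

From HB Require Import structures.
From mathcomp Require Import all_boot all_order all_algebra.
From mathcomp Require Import classical_sets reals.
From mathcomp Require Import ring lra zify.
Import Order.TTheory GRing.Theory Num.Theory.
Local Open Scope ring_scope.

(* Let S be a monomial of the multilinear representation c of f, and T a
   maximal monomial containing S.  Maximality makes the correlation of f with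
   chi_T(x) = prod_(i in T) (2 x_i - 1) nonzero, so q = chi_T * (-1)^f is a
   +-1 function with nonzero sum; it is therefore constant on a set H covering
   more than half of the cube, and on H the function f is sensitive to every
   direction of T.  Huang's signed adjacency matrix A_T of the T-directions
   satisfies A_T^2 = #|T|, hence has an eigenvector V for +-sqrt #|T| that
   vanishes outside H (one eigenspace has dimension at least half the cube).
   On H the entries of A_T are dominated by those of the adjacency matrix A_f
   of the sensitivity graph, so #|T| ||V||^2 <= ||A_f |V| ||^2, which gives
   #|S| <= #|T| <= lambda(f)^2. *)

Set Implicit Arguments. Unset Strict Implicit. Unset Printing Implicit Defensive.

Lemma sum_offdiag_antisym (R : numDomainType) (I : finType) (T : {pred I})
    (G : I -> I -> R) :
  (forall i j, i != j -> G i j = - G j i) ->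
  \sum_(i in T) \sum_(j in T) (if j != i then G i j else 0) = 0.
Proof.
move=> antisym; set S := \sum_(i in T) _.
have SN : S = - S.
  rewrite {1}/S exchange_big -sumrN; apply: eq_bigr => j _.
  rewrite -sumrN; apply: eq_bigr => i _; rewrite eq_sym.
  by case: eqP => [_|/eqP ij]; rewrite ?oppr0 // antisym // opprK.
have : S *+ 2 == 0 by rewrite mulr2n {1}SN addNr.
by rewrite mulrn_eq0 => /eqP.
Qed.

Lemma maximal_superset (I : finType) (P : pred {set I}) (S : {set I}) :
  P S -> exists T : {set I},
    [/\ S \subset T, P T & forall U : {set I}, T \subset U -> P U -> U = T].
Proof.
move=> PS; pose Q (U : {set I}) := (S \subset U) && P U.
have QS : Q S by rewrite /Q subxx PS.
have [T /andP [ST PT] Tmax] := @arg_maxnP _ S Q (fun U => #|U|) QS.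
exists T; split => // U TU PU; apply/eqP; rewrite eq_sym eqEcard TU /=.
by apply: Tmax; rewrite /Q PU (fintype.subset_trans ST TU).
Qed.

Lemma sum_enum_val (R : nmodType) (I : finType) (F : I -> R) :
  \sum_(i < #|{: I}|) F (enum_val i) = \sum_x F x.
Proof. by rewrite -big_enum_val. Qed.

Lemma majority_level_set (R : realDomainType) (I : finType) (q : I -> R) :
  (forall i, q i = 1 \/ q i = -1) -> \sum_i q i != 0 ->
  exists s : R, (#|~: [set i | q i == s]| * 2 < #|I|)%N.
Proof.
move=> pm1 nz; pose s : R := if 0 < \sum_i q i then 1 else -1.
exists s; set H := [set i | q i == s].
have one_neq : ((1 : R) == -1) = false.
  by apply/negbTE; rewrite -subr_eq0 opprK -mulr2n pnatr_eq0.
have agree i : s * q i = 1 - 2 * (i \in ~: H)%:R.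
  rewrite !inE /s; case: ifP => _; case: (pm1 i) => ->;
    rewrite ?eqxx ?one_neq ?(eq_sym (-1)) ?one_neq /=; lra.
have pos : 0 < s * \sum_i q i.
  move: nz; rewrite /s; case: ifP => [|/negbT]; first by rewrite mul1r.
  by rewrite -leNgt le_eqVlt mulN1r oppr_gt0 => /orP [->|].
have count : s * \sum_i q i = #|I|%:R - 2 * #|~: H|%:R.
  rewrite mulr_sumr (eq_bigr _ (fun i _ => agree i)) sumrB -mulr_sumr sumr_const.
  congr (_ - 2 * _); rewrite -sum1_card natr_sum [RHS]big_mkcond /=.
  by apply: eq_bigr => i _; case: (i \in ~: H).
by move: pos; rewrite count subr_gt0 -natrM ltr_nat mulnC.
Qed.

Lemma matrix_nz_entry (R : nmodType) (m p : nat) (A : 'M[R]_(m, p)) :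
  A != 0 -> exists i j, A i j != 0.
Proof.
move=> A0; suff /existsP [i /existsP [j Aij]] : [exists i, exists j, A i j != 0].
  by exists i, j.
apply: contraR A0 => /existsPn A_0; apply/eqP/matrixP => i j; rewrite mxE.
by apply/eqP; move: (A_0 i) => /existsPn /(_ j) /negPn.
Qed.

Section LinearAlgebra.
Variables (F : numFieldType) (N : nat).

Lemma rowspace_meets_support (m : nat) (M : 'M[F]_(m, N)) (Hs : {set 'I_N}) :
  (#|~: Hs| < \rank M)%N ->
  exists2 v : 'rV[F]_N, v != 0 & (v <= M)%MS /\ forall i, i \notin Hs -> v 0 i = 0.
Proof.
move=> large; pose D : 'M[F]_(N, #|~: Hs|) := \matrix_(i, j) (i == enum_val j)%:R.
pose v := nz_row (M :&: kermx D)%MS.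
have vD : v *m D = 0.
  by apply/sub_kermxP; apply: submx_trans (nz_row_sub _) (capmxSr _ _).
exists v; [|split].
- rewrite nz_row_eq0 -mxrank_eq0.
  (* rank (M :&: ker D) = rank M - rank (M D) >= rank M - #|~: Hs| > 0 *)
  move: (mxrank_mul_ker M D) (rank_leq_col (M *m D)) large.
  by set r := \rank (M :&: _)%MS; set q := \rank (M *m D); set p := \rank M; lia.
- exact: submx_trans (nz_row_sub _) (capmxSl _ _).
- move=> i iHs; have iC : i \in ~: Hs by rewrite inE.
  have /matrixP /(_ 0 (enum_rank_in iC i)) := vD; rewrite !mxE => <-.
  rewrite (bigD1 i) //= mxE enum_rankK_in // eqxx mulr1 big1 ?addr0 // => j ji.
  by rewrite mxE enum_rankK_in // (negbTE ji) mulr0.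
Qed.

(* If A^2 = e^2 with e != 0, then A - e and A + e annihilate each other and
   their ranks add up to at least N (their difference is invertible). *)
Lemma square_root_split (A : 'M[F]_N) (e : F) : e != 0 -> A *m A = (e ^+ 2)%:M ->
  [/\ (A + e%:M) *m (A - e%:M) = 0, (A - e%:M) *m (A + e%:M) = 0
    & (N <= \rank (A + e%:M)%R + \rank (A - e%:M)%R)%N].
Proof.
move=> e0 AA; split.
- rewrite mulmxDl !mulmxBr AA mul_mx_scalar !mul_scalar_mx scale_scalar_mx.
  by rewrite -expr2 addrA subrK subrr.
- rewrite mulmxBl !mulmxDr AA mul_mx_scalar !mul_scalar_mx scale_scalar_mx.
  by rewrite -expr2 [(e ^+ 2)%:M + _]addrC subrr.
have diff : (2 * e)^-1 *: ((A + e%:M) - (A - e%:M)) = 1%:M.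
  rewrite opprB addrA addrAC [A + _]addrC addrK -raddfD /= scale_scalar_mx.
  by congr (_%:M); rewrite -mulr2n mulr_natl mulVf // mulrn_eq0.
rewrite -[X in (X <= _)%N](mxrank1 F N) -diff.
apply: leq_trans (mxrank_scale _ _) _; apply: leq_trans (mxrank_add _ _) _.
by rewrite mxrank_opp.
Qed.

(* An "involution-like" matrix A^2 = e^2 has an eigenvector, with eigenvalue
   e or -e, vanishing outside any set Hs containing more than half of the
   coordinates: one of the two eigenspaces has dimension at least N/2. *)
Lemma eigenvector_on_large_set (A : 'M[F]_N) (e : F) (Hs : {set 'I_N}) :
  e != 0 -> A *m A = (e ^+ 2)%:M -> (#|~: Hs| * 2 < N)%N ->
  exists2 v : 'rV[F]_N, v != 0 &
    (v *m A = e *: v \/ v *m A = - e *: v) /\ forall i, i \notin Hs -> v 0 i = 0.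
Proof.
move=> e0 AA large; have [PQ QP rk] := square_root_split e0 AA.
have annihilated (M M' : 'M[F]_N) : M *m M' = 0 -> (#|~: Hs| < \rank M)%N ->
    exists2 v : 'rV[F]_N, v != 0 & v *m M' = 0 /\ forall i, i \notin Hs -> v 0 i = 0.
  move=> MM' rkM; have [v v0 [vM vHs]] := rowspace_meets_support rkM.
  exists v => //; split => //; case/submxP: vM => w ->.
  by rewrite -mulmxA MM' mulmx0.
case: (leqP (\rank (A - e%:M)%R) (\rank (A + e%:M)%R)) => rkPQ.
- have [v v0 [vQ vHs]] := annihilated _ _ PQ ltac:(lia).
  exists v => //; split => //; left.
  by apply/eqP; move: vQ; rewrite mulmxBr mul_mx_scalar => /eqP; rewrite subr_eq0.
- have [v v0 [vP vHs]] := annihilated _ _ QP ltac:(lia).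
  exists v => //; split => //; right.
  apply/eqP; move: vP; rewrite mulmxDr mul_mx_scalar scaleNr => /eqP.
  by rewrite addr_eq0.
Qed.

End LinearAlgebra.

Section SpectralNorm.
Variables (R : realType) (m : nat).
Implicit Types (A : 'M[R]_m) (v : 'cV[R]_m).

Lemma vnormZ (a : R) v : vnorm (a *: v) = `|a| * vnorm v.
Proof.
rewrite /vnorm -sqrtr_sqr -sqrtrM ?sqr_ge0 // mulr_sumr.
by congr Num.sqrt; apply: eq_bigr => i _; rewrite mxE exprMn.
Qed.

Lemma coord_le_vnorm v i : `|v i 0| <= vnorm v.
Proof.
rewrite -sqrtr_sqr; apply: ler_wsqrtr.
by rewrite (bigD1 i) //= lerDl sumr_ge0 // => j _; rewrite sqr_ge0.
Qed.

(* The set defining spec_norm A is bounded, by sqrt of the sum of squared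
   absolute row sums of A; hence spec_norm A is a genuine supremum. *)
Lemma spec_norm_bounded A :
  has_ubound [set r : R | exists v, vnorm v = 1 /\ r = vnorm (A *m v)].
Proof.
exists (Num.sqrt (\sum_j (\sum_k `|A j k|) ^+ 2)) => _ [v [v1 ->]].
apply: ler_wsqrtr; apply: ler_sum => j _.
rewrite -real_normK ?num_real //; apply: lerXn2r; rewrite ?nnegrE ?sumr_ge0 //.
rewrite mxE; apply: le_trans (ler_norm_sum _ _ _) _; apply: ler_sum => k _.
rewrite normrM -[X in _ <= X]mulr1 ler_wpM2l // -v1; exact: coord_le_vnorm.
Qed.

Lemma vnorm_le_spec_norm A v : vnorm v = 1 -> vnorm (A *m v) <= spec_norm A.
Proof. by move=> v1; apply: (ub_le_sup (spec_norm_bounded A)); exists v. Qed.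

Lemma spec_norm_lower_bound A v (t : R) : 0 <= t -> v != 0 ->
  t * \sum_i v i 0 ^+ 2 <= \sum_i (A *m v) i 0 ^+ 2 -> t <= spec_norm A ^+ 2.
Proof.
move=> t0 v0 ineq.
have [i [j]] := matrix_nz_entry v0; rewrite [j]ord1 => vi.
have vpos : 0 < vnorm v by apply: lt_le_trans (coord_le_vnorm v i); rewrite normr_gt0.
have inv_ge0 : 0 <= (vnorm v)^-1 by rewrite invr_ge0 ltW.
have w1 : vnorm ((vnorm v)^-1 *: v) = 1.
  by rewrite vnormZ (ger0_norm inv_ge0) mulVf // gt_eqF.
have sqrt_t : Num.sqrt t * vnorm v <= vnorm (A *m v).
  by rewrite /vnorm -sqrtrM //; apply: ler_wsqrtr.
have sqrt_t_le : Num.sqrt t <= spec_norm A.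
  apply: le_trans (vnorm_le_spec_norm A w1).
  by rewrite -scalemxAr vnormZ (ger0_norm inv_ge0) mulrC ler_pdivlMr.
rewrite -(sqr_sqrtr t0) lerXn2r ?nnegrE ?sqrtr_ge0 //.
exact: le_trans (sqrtr_ge0 t) sqrt_t_le.
Qed.

End SpectralNorm.

Lemma spec_sens_lower_bound (R : realType) (n : nat) (f : cube n -> bool)
    (V : cube n -> R) (t : R) :
  0 <= t -> (exists x, V x != 0) ->
  t * \sum_x V x ^+ 2 <= \sum_y (\sum_x (sens_edge f y x)%:R * `|V x|) ^+ 2 ->
  t <= spec_sens R f ^+ 2.
Proof.
move=> t0 [x Vx] ineq; pose v : 'cV[R]_#|{: cube n}| := \col_i `|V (enum_val i)|.
apply: (spec_norm_lower_bound t0 (v := v)).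
  apply/eqP => /colP /(_ (enum_rank x)); rewrite !mxE enum_rankK => /eqP.
  by rewrite normr_eq0 (negbTE Vx).
have Av i : (sens_adj R f *m v) i 0 = \sum_x (sens_edge f (enum_val i) x)%:R * `|V x|.
  rewrite mxE -(sum_enum_val (fun x => (sens_edge f (enum_val i) x)%:R * `|V x|)).
  by apply: eq_bigr => k _; rewrite !mxE.
under eq_bigr do rewrite mxE real_normK ?num_real //.
under [X in _ <= X]eq_bigr do rewrite Av.
by rewrite (sum_enum_val (fun x => V x ^+ 2))
  (sum_enum_val (fun y => (\sum_x (sens_edge f y x)%:R * `|V x|) ^+ 2)).
Qed.

Section BooleanCube.
Variable n : nat.
Implicit Types (x y : cube n) (k l : 'I_n).

Definition flip x k : cube n := [ffun i => if i == k then ~~ x i else x i].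

Lemma flipE x k i : flip x k i = if i == k then ~~ x i else x i.
Proof. by rewrite ffunE. Qed.

Lemma flipK x k : flip (flip x k) k = x.
Proof. by apply/ffunP => i; rewrite !flipE; case: eqP => // _; rewrite negbK. Qed.

Lemma flipC x k l : flip (flip x k) l = flip (flip x l) k.
Proof. by apply/ffunP => i; rewrite !flipE; case: (i =P l); case: (i =P k). Qed.

Lemma flip_inj x k l : flip x k = flip x l -> k = l.
Proof.
by move=> /ffunP /(_ k); rewrite !flipE eqxx; case: eqP => // _; case: (x k).
Qed.

Lemma sens_edge_flip (f : cube n -> bool) x k :
  f x != f (flip x k) -> sens_edge f (flip x k) x.
Proof.
move=> fxk; rewrite /sens_edge (eq_sym (f _)) fxk andbT.
suff -> : [set i | flip x k i != x i] = [set k] by rewrite cards1.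
apply/setP => i; rewrite !inE flipE; case: (i =P k) => [->|_]; last by rewrite eqxx.
by case: (x k).
Qed.

End BooleanCube.

Section SignedSubcube.
Variables (R : numDomainType) (n : nat).
Implicit Types (x y z : cube n) (k l : 'I_n) (T : {set 'I_n}).

Definition edge_sign x k : R := \prod_(j : 'I_n | (j < k)%N) (-1) ^+ x j.

Lemma edge_sign_flip x k l :
  edge_sign (flip x k) l = (if (k < l)%N then -1 else 1) * edge_sign x l.
Proof.
rewrite /edge_sign; case: ifP => [kl|lk]; last first.
  rewrite mul1r; apply: eq_bigr => i il; rewrite flipE.
  by case: eqP => // ik; rewrite -ik il in lk.
rewrite (bigD1 k) //= [in RHS](bigD1 k kl) /= flipE eqxx mulrA; congr (_ * _).
  by case: (x k); rewrite ?expr0 ?expr1 ?mulN1r ?opprK ?mulr1.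
by apply: eq_bigr => i /andP [_ ik]; rewrite flipE (negbTE ik).
Qed.

Lemma edge_sign_sqr x k : edge_sign x k * edge_sign x k = 1.
Proof.
rewrite /edge_sign -big_split /=; apply: big1 => i _.
by case: (x i); rewrite ?expr0 ?expr1 ?mulr1 ?mulN1r ?opprK.
Qed.

Lemma norm_edge_sign x k : `|edge_sign x k| = 1.
Proof.
have /eqP := edge_sign_sqr x k; rewrite -expr2 sqrf_eq1.
by case/orP => /eqP ->; rewrite ?normrN normr1.
Qed.

Lemma edge_sign_anticomm x k l : k != l ->
  edge_sign x k * edge_sign (flip x k) l = - (edge_sign x l * edge_sign (flip x l) k).
Proof.
move=> kl; rewrite !edge_sign_flip; case: (ltngtP k l) => [_|_|/val_inj klE].
- by ring.
- by ring.
- by rewrite klE eqxx in kl.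
Qed.

Definition signed_adj T x y : R := \sum_(k in T) (y == flip x k)%:R * edge_sign x k.

Lemma signed_adj_flip T x k : k \in T -> signed_adj T x (flip x k) = edge_sign x k.
Proof.
move=> kT; rewrite /signed_adj (bigD1 k kT) /= eqxx mul1r big1 ?addr0 // => l /andP [_ lk].
suff /negbTE -> : flip x k != flip x l by rewrite mul0r.
by apply/eqP => /flip_inj kl; rewrite kl eqxx in lk.
Qed.

Lemma signed_adj_support T x y :
  signed_adj T x y != 0 -> exists2 k, k \in T & y = flip x k.
Proof.
move=> nz; suff /existsP [k /andP [kT /eqP ->]] :
    [exists k, (k \in T) && (y == flip x k)] by exists k.
apply: contraNT nz => /existsPn none; apply/eqP/big1 => k kT.
by move: (none k); rewrite kT /= => /negbTE ->; rewrite mul0r.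
Qed.

(* Huang's identity: signed_adj T squares to #|T| times the identity.  The
   diagonal terms contribute #|T|, the two paths around each 2-face cancel. *)
Lemma signed_adj_sq T x z :
  \sum_y signed_adj T x y * signed_adj T y z = #|T|%:R * (z == x)%:R.
Proof.
pose G k l := edge_sign x k * edge_sign (flip x k) l * (z == flip (flip x k) l)%:R.
have expand : \sum_y signed_adj T x y * signed_adj T y z
    = \sum_(k in T) \sum_(l in T) G k l.
  under eq_bigr do rewrite [signed_adj T x _]/signed_adj big_distrl /=.
  rewrite exchange_big /=; apply: eq_bigr => k _.
  rewrite (bigD1 (flip x k)) //= eqxx mul1r big1 ?addr0 => [|y /negbTE ->]; last first.
    by rewrite !mul0r.
  rewrite /signed_adj big_distrr /=; apply: eq_bigr => l _; rewrite /G; ring.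
have diag k : G k k = (z == x)%:R.
  by rewrite /G flipK edge_sign_flip ltnn mul1r edge_sign_sqr mul1r.
have antisym k l : k != l -> G k l = - G l k.
  by move=> kl; rewrite /G edge_sign_anticomm // flipC mulNr.
rewrite expand; transitivity (\sum_(k in T) G k k +
    \sum_(k in T) \sum_(l in T) (if l != k then G k l else 0)).
  by rewrite -big_split; apply: eq_bigr => k kT; rewrite (bigD1 k kT) /= big_mkcondr.
rewrite sum_offdiag_antisym // addr0 (eq_bigr _ (fun k _ => diag k)).
by rewrite sumr_const mulr_natl.
Qed.

End SignedSubcube.

Section TopCharacter.
Variables (R : numDomainType) (n : nat).
Implicit Types (x : cube n) (T : {set 'I_n}).

Lemma sum_cube_prod (g : 'I_n -> bool -> R) :
  \sum_(x : cube n) \prod_i g i (x i) = \prod_i (g i true + g i false).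
Proof.
rewrite -bigA_distr_bigA /=; apply: eq_bigr => i _; exact: big_bool.
Qed.

(* chi T x = prod_(i in T) (2 x_i - 1), the character of {0,1}^n whose
   correlation with f detects the coefficient of a maximal monomial T. *)
Definition chi T x : R := \prod_(i in T) (-1) ^+ (~~ x i).

Lemma chi_flip T x k : k \in T -> chi T (flip x k) = - chi T x.
Proof.
move=> kT; rewrite /chi (bigD1 k kT) [in RHS](bigD1 k kT) /= flipE eqxx negbK.
rewrite -mulNr; congr (_ * _); first by case: (x k); rewrite /= ?expr0 ?expr1 ?opprK.
by apply: eq_bigr => i /andP [_ /negbTE ik]; rewrite flipE ik.
Qed.

Lemma chi_sqr T x : chi T x * chi T x = 1.
Proof.
rewrite /chi -big_split /=; apply: big1 => i _.
by case: (x i); rewrite /= ?expr0 ?expr1 ?mulr1 ?mulN1r ?opprK.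
Qed.

Lemma sum_chi T : (0 < #|T|)%N -> \sum_x chi T x = 0.
Proof.
rewrite card_gt0 => /finset.set0Pn [i iT]; under eq_bigr do rewrite /chi big_mkcond /=.
rewrite (sum_cube_prod (fun i b => if i \in T then (-1) ^+ (~~ b) else 1)).
by rewrite (bigD1 i) //= iT /= expr0 expr1 addrN mul0r.
Qed.

End TopCharacter.

(* If T is a maximal monomial of the multilinear representation of f, then
   f correlates with chi T: the correlation is c T times a power of 2, all
   other monomials being killed by some factor sum (-1)^(~~ b) or 1 + (-1). *)
Lemma chi_correlation (R : realType) (n : nat) (f : cube n -> bool)
    (c : {set 'I_n} -> R) (T : {set 'I_n}) :
  ml_represents c f -> c T != 0 ->
  (forall U : {set 'I_n}, T \subset U -> c U != 0 -> U = T) ->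
  \sum_x chi R T x * (f x)%:R != 0.
Proof.
move=> rep cT Tmax; under eq_bigr do rewrite -rep /ml_eval big_distrr /=.
rewrite exchange_big /=.
pose g (U : {set 'I_n}) (i : 'I_n) (b : bool) : R :=
  (if i \in T then (-1) ^+ (~~ b) else 1) * (if i \in U then b%:R else 1).
have factor U x :
    chi R T x * (c U * \prod_(i in U) (x i)%:R) = c U * \prod_i g U i (x i).
  rewrite mulrCA /chi (big_mkcond (fun i => i \in T)) (big_mkcond (fun i => i \in U)).
  by rewrite -big_split.
under eq_bigr do (under eq_bigr do rewrite factor; rewrite -big_distrr /= sum_cube_prod).
rewrite (bigD1 T) //= [X in _ + X]big1 ?addr0 => [|U UT].
  rewrite mulf_neq0 //; apply/prodf_neq0 => i _; rewrite /g.
  case: (i \in T); rewrite /= ?expr0 ?expr1 ?mulr1 ?mulr0 ?addr0 ?oner_eq0 //.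
  by rewrite -mulr2n pnatr_eq0.
have [TU|/subsetPn [i iT iU]] := boolP (T \subset U).
  suff /eqP -> : c U == 0 by rewrite mul0r.
  by apply: contraR UT => cU; apply/eqP/Tmax.
by rewrite (bigD1 i) //= /g iT (negbTE iU) /= expr0 expr1 !mulr1 addrN mul0r mulr0.
Qed.

(* If f correlates with chi T (T nonempty), then on some set H covering more
   than half of the cube f is sensitive to every direction of T: take H a
   majority level set of q = chi T * (-1)^f, since flipping a direction of T
   flips chi T while q stays constant on H. *)
Lemma sensitive_majority_set (R : realDomainType) (n : nat) (f : cube n -> bool)
    (T : {set 'I_n}) :
  (0 < #|T|)%N -> \sum_x chi R T x * (f x)%:R != 0 ->
  exists H : {set cube n}, (#|~: H| * 2 < #|{: cube n}|)%N /\
    forall x k, k \in T -> x \in H -> flip x k \in H -> f x != f (flip x k).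
Proof.
move=> T0 corr; pose q x : R := chi R T x * (1 - 2 * (f x)%:R).
have pm1 x : q x = 1 \/ q x = -1.
  have /eqP := chi_sqr R T x; rewrite -expr2 sqrf_eq1 /q.
  by case/orP => /eqP ->; case: (f x);
    rewrite /= ?mulr1n ?mulr0n; [right|left|left|right]; lra.
have q_nz : \sum_x q x != 0.
  under eq_bigr do rewrite /q mulrBr mulr1 mulrCA.
  by rewrite sumrB sum_chi // -mulr_sumr sub0r oppr_eq0 mulf_neq0 // pnatr_eq0.
have [s large] := majority_level_set pm1 q_nz.
exists [set x | q x == s]; split => // x k kT; rewrite !inE => /eqP qx /eqP qxk.
have := congr1 (fun r => chi R T x * r) (etrans qxk (esym qx)).
rewrite /q chi_flip // mulNr mulrN !mulrA chi_sqr !mul1r.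
by case: (f x); case: (f (flip x k)) => //=; rewrite ?mulr1n ?mulr0n => eq;
  exfalso; clear -eq; lra.
Qed.

Lemma signed_adj_eigenfunction (R : realType) (n : nat) (T : {set 'I_n})
    (H : {set cube n}) :
  (0 < #|T|)%N -> (#|~: H| * 2 < #|{: cube n}|)%N ->
  exists V : cube n -> R, exists e : R,
    [/\ exists x, V x != 0, e ^+ 2 = #|T|%:R,
        forall y, \sum_x V x * signed_adj R T x y = e * V y
      & forall x, x \notin H -> V x = 0].
Proof.
move=> T0 large; set N := #|{: cube n}|.
pose A : 'M[R]_N := \matrix_(i, j) signed_adj R T (enum_val i) (enum_val j).
pose e := Num.sqrt (#|T|%:R : R).
have e2 : e ^+ 2 = #|T|%:R by rewrite sqr_sqrtr ?ler0n.
have e0 : e != 0 by rewrite gt_eqF // sqrtr_gt0 ltr0n.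
have AA : A *m A = (e ^+ 2)%:M.
  apply/matrixP => i j; rewrite !mxE e2.
  under eq_bigr do rewrite !mxE.
  rewrite (sum_enum_val
    (fun y => signed_adj R T (enum_val i) y * signed_adj R T y (enum_val j))).
  by rewrite signed_adj_sq (inj_eq enum_val_inj) eq_sym mulr_natr.
pose Hs := [set i : 'I_N | enum_val i \in H].
have largeHs : (#|~: Hs| * 2 < N)%N.
  suff -> : #|~: Hs| = #|~: H| by [].
  rewrite -(card_imset _ enum_val_inj); apply: eq_card => x.
  by rewrite -{1}(enum_rankK x) mem_imset ?inE ?enum_rankK //; exact: enum_val_inj.
have [v v0 [vA vHs]] := eigenvector_on_large_set e0 AA largeHs.
have [e' [e'2 ve']] : exists e' : R, e' ^+ 2 = #|T|%:R /\ v *m A = e' *: v.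
  by case: vA => vA; [exists e | exists (- e); rewrite sqrrN].
exists (fun x => v 0 (enum_rank x)), e'; split => //.
- have [i [j]] := matrix_nz_entry v0; rewrite [i]ord1 => vj.
  by exists (enum_val j); rewrite enum_valK.
- move=> y; have /matrixP /(_ 0 (enum_rank y)) := ve'; rewrite !mxE => <-.
  rewrite -(sum_enum_val (fun x => v 0 (enum_rank x) * signed_adj R T x y)).
  by apply: eq_bigr => k _; rewrite !mxE enum_valK enum_rankK.
- by move=> x xH; apply: vHs; rewrite inE enum_rankK.
Qed.

Lemma signed_adj_le_sens_edge (R : numDomainType) (n : nat) (f : cube n -> bool)
    (T : {set 'I_n}) (H : {set cube n}) :
  (forall x k, k \in T -> x \in H -> flip x k \in H -> f x != f (flip x k)) ->
  forall x y, x \in H -> y \in H -> `|signed_adj R T x y| <= (sens_edge f y x)%:R.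
Proof.
move=> sensH x y xH yH.
have [->|/signed_adj_support [k kT yE]] := eqVneq (signed_adj R T x y) 0.
  by rewrite normr0 ler0n.
rewrite yE in yH *; rewrite sens_edge_flip ?sensH //.
by rewrite signed_adj_flip // norm_edge_sign.
Qed.

(* The heart of the argument: a maximal monomial T of the representation
   of f has #|T| <= lambda(f)^2.  The eigenfunction V of the signed
   T-adjacency matrix, supported where f is T-sensitive, satisfies
   #|T| V(y)^2 = (sum_x V x A_T(x,y))^2 <= (sum_x A_f(y,x) |V x|)^2. *)
Lemma maximal_monomial_le (R : realType) (n : nat) (f : cube n -> bool)
    (c : {set 'I_n} -> R) (T : {set 'I_n}) :
  ml_represents c f -> c T != 0 ->
  (forall U : {set 'I_n}, T \subset U -> c U != 0 -> U = T) ->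
  (#|T|%:R : R) <= spec_sens R f ^+ 2.
Proof.
move=> rep cT Tmax; have [->|T0] := posnP #|T|; first by rewrite sqr_ge0.
have [H [large sensH]] := sensitive_majority_set T0 (chi_correlation rep cT Tmax).
have [V [e [V0 e2 eig VH]]] := signed_adj_eigenfunction R T0 large.
apply: spec_sens_lower_bound V0 _ => //; rewrite mulr_sumr; apply: ler_sum => y _.
have rhs_ge0 : 0 <= \sum_x (sens_edge f y x)%:R * `|V x|.
  by apply: sumr_ge0 => x _; rewrite mulr_ge0.
rewrite -e2 -exprMn -real_normK ?num_real //; apply: lerXn2r; rewrite ?nnegrE //.
have [yH|yH] := boolP (y \in H); last by rewrite VH // mulr0 normr0.
rewrite -eig; apply: le_trans (ler_norm_sum _ _ _) _; apply: ler_sum => x _.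
rewrite normrM mulrC.
have [xH|xH] := boolP (x \in H); last by rewrite VH // normr0 !mulr0.
by rewrite ler_wpM2r // (signed_adj_le_sens_edge R sensH).
Qed.

Unset Implicit Arguments.
Set Strict Implicit.
Theorem theorem1p1 (R : realType) (n : nat) (f : cube n -> bool)
    (c : {set 'I_n} -> R) :
  ml_represents c f ->
  forall S : {set 'I_n}, c S != 0 -> (#|S|%:R : R) <= spec_sens R f ^+ 2.
Proof.
move=> rep S cS.
have [T [ST cT Tmax]] := @maximal_superset _ (fun U => c U != 0) S cS.
apply: le_trans (maximal_monomial_le rep cT Tmax).
by rewrite ler_nat subset_leq_card.
Qed.
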